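(* Let $\alpha_1,\alpha_2,\alpha_3,\alpha_4\in\mathcal{O}^\times$. Then $$\min\{v(\alpha_1+\alpha_2-\alpha_3-\alpha_4),\,v(\alpha_1^{-1}+\alpha_2^{-1}-\alpha_3^{-1}-\alpha_4^{-1})\}\le v(\alpha_1^l+\alpha_2^l-\alpha_3^l-\alpha_4^l)$$ for all odd integers $l$. If additionally $\alpha_1+\alpha_2\in\mathcal{O}^\times$, then this holds for all integers $l$.
   Context: $F$ is a non-archimedean local field of characteristic $0$ and odd residue characteristic, $\mathcal{O}$ its ring of integers, $v$ its normalised valuation with $v(0)=\infty$. *)

(* with extended integers \bar int from mathcomp-analysis
   (constructive_ereal) as the value group Z ∪ {+oo}. *)
From mathcomp Require Import all_boot all_order all_algebra.
From mathcomp Require Import constructive_ereal.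
Set Implicit Arguments. Unset Strict Implicit. Unset Printing Implicit Defensive.
Import Order.TTheory GRing.Theory Num.Theory.
Local Open Scope ring_scope.

Definition normalised_valuation (F : fieldType) (v : F -> \bar int) : Prop :=
  [/\ v 0 = +oo%E,
      (forall x : F, x != 0 -> exists n : int, v x = n%:E),
      (forall x y : F, v (x * y)%R = (v x + v y)%E),
      (forall x y : F, (Order.min (v x) (v y) <= v (x + y)%R)%E)
    & exists pi : F, v pi = 1%:E].

Definition v_cauchy (F : fieldType) (v : F -> \bar int) (u : nat -> F) : Prop :=
  forall N : int, exists M : nat, forall m n : nat,
    (M <= m)%N -> (M <= n)%N -> (N%:E <= v (u m - u n)%R)%E.

Definition v_converges (F : fieldType) (v : F -> \bar int) (u : nat -> F) : Prop :=
  exists L : F, forall N : int, exists M : nat, forall n : nat,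
    (M <= n)%N -> (N%:E <= v (u n - L)%R)%E.

Definition v_complete (F : fieldType) (v : F -> \bar int) : Prop :=
  forall u : nat -> F, v_cauchy v u -> v_converges v u.

(* ring of integers O = {x | v x >= 0}; maximal ideal {x | v x > 0};
   the residue field O/m is finite: a finite list of representatives. *)
Definition finite_residue_field (F : fieldType) (v : F -> \bar int) : Prop :=
  exists s : seq F, (forall r, r \in s -> (0 <= v r)%E) /\
    forall x : F, (0 <= v x)%E -> exists2 r, r \in s & (0 < v (x - r)%R)%E.

Definition char0_local_field_odd_residue (F : fieldType) (v : F -> \bar int)
  : Prop :=
  [/\ [pchar F] =i pred0,
      normalised_valuation v,
      v_complete v,
      finite_residue_field v
    & v 2%:R = 0%:E  (* 2 is a unit in O, i.e. the residue characteristic is odd *)].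

Definition is_Ounit (F : fieldType) (v : F -> \bar int) (x : F) : Prop :=
  v x = 0%:E.

From HB Require Import structures.
From mathcomp Require Import all_boot all_order all_algebra.
From mathcomp Require Import constructive_ereal.
From mathcomp Require Import ring.
Set Implicit Arguments. Unset Strict Implicit. Unset Printing Implicit Defensive.
Import Order.TTheory GRing.Theory Num.Theory.
Local Open Scope ring_scope.

(* Let s, p and t, q be the sums and products of a1, a2 and of a3, a4, and let
   I = {x | v x >= m} with m the minimum in question; I is a module over the
   valuation ring O. The hypotheses say s = t mod I, and, since
   s q - t p = a1 a2 a3 a4 (a1^-1 + a2^-1 - a3^-1 - a4^-1), also s q = t p mod I;
   together they give s (p - q) = t (p - q) = 0 mod I. The power sums obey
   P_{n+2} = s P_{n+1} - p P_n, so induction yields s (P_n - Q_n) = 0 mod I for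
   all n, and then P_n = Q_n mod I for odd n because t divides Q_n in O.
   If s is a unit, p = q mod I and the recurrence gives P_n = Q_n mod I for all
   n. Negative exponents come from applying all this to the inverses, which
   merely swaps the two hypotheses. *)

Lemma power_sum2S (R : comNzRingType) (x y : R) n :
  x ^+ n.+2 + y ^+ n.+2 = (x + y) * (x ^+ n.+1 + y ^+ n.+1) - x * y * (x ^+ n + y ^+ n).
Proof. by rewrite !exprS; ring. Qed.

Lemma power_sum2_odd_factor (R : comNzRingType) (S : subringClosed R) (x y : R) n :
  x \in S -> y \in S ->
  exists2 r, r \in S & x ^+ n.*2.+1 + y ^+ n.*2.+1 = (x + y) * r.
Proof.
move=> Sx Sy; elim: n => [|n [r Sr IHr]]; first by exists 1; rewrite ?rpred1 ?mulr1 ?expr1.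
exists (x ^+ n.*2.+2 + y ^+ n.*2.+2 - x * y * r).
  by rewrite rpredB ?rpredD ?rpredX ?rpredM.
by rewrite doubleS power_sum2S IHr; ring.
Qed.

Section PowerSumCongruence.

Variables (R : comNzRingType) (O : subringClosed R) (I : zmodClosed R).
Hypothesis mul_submod : forall c x, c \in O -> x \in I -> c * x \in I.
Variables a1 a2 a3 a4 : R.
Hypotheses (Oa1 : a1 \in O) (Oa2 : a2 \in O) (Oa3 : a3 \in O) (Oa4 : a4 \in O).

Let s := a1 + a2.
Let t := a3 + a4.
Let p := a1 * a2.
Let q := a3 * a4.
Let Q n := a3 ^+ n + a4 ^+ n.
Let D n := a1 ^+ n + a2 ^+ n - Q n.

Hypotheses (I_st : s - t \in I) (I_sqtp : s * q - t * p \in I).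

Let Os : s \in O. Proof. exact: rpredD. Qed.
Let Op : p \in O. Proof. exact: rpredM. Qed.
Let OQ n : Q n \in O. Proof. by rewrite rpredD ?rpredX. Qed.

Let D0 : D 0 = 0. Proof. by rewrite /D /Q !expr0 subrr. Qed.
Let D1 : D 1 = s - t. Proof. by rewrite /D /Q !expr1. Qed.

Let DS n : D n.+2 = s * D n.+1 - p * D n + Q n.+1 * (s - t) - Q n * (p - q).
Proof. by rewrite /D /Q !power_sum2S -/s -/t -/p -/q; ring. Qed.

Let I_s_pq : s * (p - q) \in I.
Proof.
have -> : s * (p - q) = p * (s - t) - (s * q - t * p) by ring.
by rewrite rpredB ?mul_submod.
Qed.

Let I_t_pq : t * (p - q) \in I.
Proof.
have -> : t * (p - q) = s * (p - q) - (p - q) * (s - t) by ring.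
by rewrite rpredB // mul_submod // rpredB // rpredM.
Qed.

Let I_s_D n : s * D n \in I.
Proof.
suff: s * D n \in I /\ s * D n.+1 \in I by case.
elim: n => [|n [IHn IHn1]]; first by rewrite D0 D1 mulr0 rpred0 mul_submod.
split=> //; have -> : s * D n.+2 = s * (s * D n.+1) - p * (s * D n)
    + Q n.+1 * s * (s - t) - Q n * (s * (p - q)) by rewrite DS; ring.
by apply: rpredB; [apply: rpredD; [apply: rpredB|]|]; apply: mul_submod; rewrite ?rpredM.
Qed.

Lemma power_sum_congr_odd n : odd n -> a1 ^+ n + a2 ^+ n - (a3 ^+ n + a4 ^+ n) \in I.
Proof.
move=> n_odd; rewrite -(odd_double_half n) n_odd add1n.
elim: n./2 => [|k IHk]; first by rewrite -/(D 1) D1.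
have [r Or Qr] : exists2 r, r \in O & Q k.*2.+1 = t * r.
  exact: power_sum2_odd_factor.
rewrite -/(D _) doubleS DS Qr.
have -> : t * r * (p - q) = r * (t * (p - q)) by ring.
apply: rpredB; [apply: rpredD; [apply: rpredB|]|]; first exact: I_s_D.
all: exact: mul_submod.
Qed.

Lemma power_sum_congr_unit u : u \in O -> u * s = 1 ->
  forall n, a1 ^+ n + a2 ^+ n - (a3 ^+ n + a4 ^+ n) \in I.
Proof.
move=> Ou us n; have I_pq : p - q \in I.
  by rewrite -[p - q]mul1r -us -mulrA mul_submod.
suff: D n \in I /\ D n.+1 \in I by case.
elim: n => [|n [IHn IHn1]]; first by rewrite D0 D1 rpred0.
split=> //; rewrite DS.
by apply: rpredB; [apply: rpredD; [apply: rpredB|]|]; apply: mul_submod.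
Qed.

End PowerSumCongruence.

Lemma exprz_power_sum_diff (R : unitRingType) (S : {pred R}) (c : pred nat)
    (a1 a2 a3 a4 : R) :
  (forall n, c n -> a1 ^+ n + a2 ^+ n - (a3 ^+ n + a4 ^+ n) \in S) ->
  (forall n, c n -> a1^-1 ^+ n + a2^-1 ^+ n - (a3^-1 ^+ n + a4^-1 ^+ n) \in S) ->
  forall l : int, c `|l|%N -> a1 ^ l + a2 ^ l - a3 ^ l - a4 ^ l \in S.
Proof.
move=> Spos Sneg [] n cn; rewrite -addrA -opprD; first exact: Spos.
have exprNz a : a ^ Negz n = a^-1 ^+ n.+1 by rewrite exprVn.
by rewrite !exprNz; apply: Sneg.
Qed.

Section Valuation.

Variables (F : fieldType) (v : F -> \bar int).
Hypotheses (v0 : v 0 = +oo%E)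
  (v_fin : forall x, x != 0 -> exists n : int, v x = n%:E)
  (vM : forall x y, v (x * y) = (v x + v y)%E)
  (v_ultra : forall x y, (Order.min (v x) (v y) <= v (x + y))%E).

Lemma v1 : v 1 = 0%:E.
Proof.
have [n vn] := v_fin (oner_neq0 F).
by have := vM 1 1; rewrite mulr1 vn -EFinD => -[]; rewrite -[n in n = _]addr0 => /addrI <-.
Qed.

Lemma vN x : v (- x) = v x.
Proof.
suff vN1 : v (-1) = 0%:E by rewrite -mulN1r vM vN1 add0e.
have [n vn] : exists n : int, v (-1) = n%:E by apply: v_fin; rewrite oppr_eq0 oner_neq0.
have := vM (-1) (-1); rewrite mulrNN mulr1 v1 vn -EFinD => -[] /eqP.
by rewrite eq_sym -mulr2n mulrn_eq0 => /eqP ->.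
Qed.

Lemma v_unit_neq0 x : v x = 0%:E -> x != 0.
Proof. by apply: contraPneq => ->; rewrite v0. Qed.

Lemma vV_unit x : v x = 0%:E -> v x^-1 = 0%:E.
Proof. by move=> vx; have := vM x x^-1; rewrite mulfV ?v_unit_neq0 // v1 vx add0e. Qed.

Lemma v_addV_unit x y :
  v x = 0%:E -> v y = 0%:E -> v (x + y) = 0%:E -> v (x^-1 + y^-1) = 0%:E.
Proof.
move=> vx vy vxy; have [x0 y0] := (v_unit_neq0 vx, v_unit_neq0 vy).
have -> : x^-1 + y^-1 = (x + y) * (x^-1 * y^-1) by field; rewrite x0 y0.
by rewrite !vM vxy !vV_unit.
Qed.

Definition v_ge (m : \bar int) : {pred F} := [pred x | (m <= v x)%E].

Lemma v_ge_zmod_closed m : zmod_closed (v_ge m).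
Proof.
split=> [|x y]; rewrite !inE ?v0 ?leey // => vx vy.
by apply: le_trans (v_ultra _ _); rewrite le_min vx vN.
Qed.

HB.instance Definition _ m := GRing.isZmodClosed.Build F (v_ge m) (v_ge_zmod_closed m).

Definition vring : {pred F} := v_ge 0.

Lemma v_ge_mul m c x : c \in vring -> x \in v_ge m -> c * x \in v_ge m.
Proof. by rewrite !inE vM; exact: lee_paddl. Qed.

Lemma vring_subring_closed : subring_closed vring.
Proof.
split=> [|x y|x y]; first by rewrite inE v1.
  exact: rpredB.
exact: v_ge_mul.
Qed.

HB.instance Definition _ := GRing.isSubringClosed.Build F vring vring_subring_closed.

Lemma unit_vring x : v x = 0%:E -> x \in vring.
Proof. by rewrite inE => ->. Qed.

Lemma v_ge_power_sum_diff m a1 a2 a3 a4 :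
  v a1 = 0%:E -> v a2 = 0%:E -> v a3 = 0%:E -> v a4 = 0%:E ->
  a1 + a2 - a3 - a4 \in v_ge m ->
  a1^-1 + a2^-1 - a3^-1 - a4^-1 \in v_ge m ->
  (forall n, odd n -> a1 ^+ n + a2 ^+ n - (a3 ^+ n + a4 ^+ n) \in v_ge m) /\
  (v (a1 + a2) = 0%:E ->
     forall n, a1 ^+ n + a2 ^+ n - (a3 ^+ n + a4 ^+ n) \in v_ge m).
Proof.
move=> va1 va2 va3 va4 IX IY.
have [a1_0 a2_0 a3_0 a4_0] := And4 (v_unit_neq0 va1) (v_unit_neq0 va2)
  (v_unit_neq0 va3) (v_unit_neq0 va4).
have [Oa1 Oa2 Oa3 Oa4] := And4 (unit_vring va1) (unit_vring va2)
  (unit_vring va3) (unit_vring va4).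
have I_st : a1 + a2 - (a3 + a4) \in v_ge m by rewrite opprD addrA.
have I_sqtp : (a1 + a2) * (a3 * a4) - (a3 + a4) * (a1 * a2) \in v_ge m.
  have -> : (a1 + a2) * (a3 * a4) - (a3 + a4) * (a1 * a2)
      = a1 * a2 * a3 * a4 * (a1^-1 + a2^-1 - a3^-1 - a4^-1).
    by field; rewrite a1_0 a2_0 a3_0 a4_0.
  by apply: v_ge_mul; rewrite // !rpredM // unit_vring.
split; first exact: (power_sum_congr_odd (@v_ge_mul m)).
move=> vs; apply: (power_sum_congr_unit (@v_ge_mul m)) (mulVf (v_unit_neq0 vs)) => //.
exact/unit_vring/vV_unit.
Qed.

End Valuation.

Theorem lemma12p2 (F : fieldType) (v : F -> \bar int)
  (HF : char0_local_field_odd_residue v)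
  (a1 a2 a3 a4 : F)
  (h1 : is_Ounit v a1) (h2 : is_Ounit v a2)
  (h3 : is_Ounit v a3) (h4 : is_Ounit v a4) :
  (forall l : int, odd `|l|%N ->
     (Order.min (v (a1 + a2 - a3 - a4)%R)
                (v (a1^-1 + a2^-1 - a3^-1 - a4^-1)%R)
      <= v (a1 ^ l + a2 ^ l - a3 ^ l - a4 ^ l)%R)%E)
  /\
  (is_Ounit v (a1 + a2) ->
   forall l : int,
     (Order.min (v (a1 + a2 - a3 - a4)%R)
                (v (a1^-1 + a2^-1 - a3^-1 - a4^-1)%R)
      <= v (a1 ^ l + a2 ^ l - a3 ^ l - a4 ^ l)%R)%E).
Proof.
case: HF => _ [v0 v_fin vM v_ultra _] _ _ _.
set m := Order.min _ _.
have mX : a1 + a2 - a3 - a4 \in v_ge v m by rewrite inE ge_min lexx.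
have mY : a1^-1 + a2^-1 - a3^-1 - a4^-1 \in v_ge v m by rewrite inE ge_min lexx orbT.
have vV := vV_unit v0 v_fin vM.
have [odd_pos unit_pos] := v_ge_power_sum_diff v0 v_fin vM v_ultra h1 h2 h3 h4 mX mY.
have mX' : a1^-1^-1 + a2^-1^-1 - a3^-1^-1 - a4^-1^-1 \in v_ge v m by rewrite !invrK.
have [odd_neg unit_neg] := v_ge_power_sum_diff v0 v_fin vM v_ultra
  (vV _ h1) (vV _ h2) (vV _ h3) (vV _ h4) mY mX'.
split=> [|vs l]; first exact: exprz_power_sum_diff odd_pos odd_neg.
have vs' := v_addV_unit v0 v_fin vM h1 h2 vs.
exact: (exprz_power_sum_diff (c := predT) (fun n _ => unit_pos vs n) (fun n _ => unit_neg vs' n)).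
Qed.
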